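(* Let $S_n(x)$ be the Stirling polynomials, defined by $\left(\frac{t}{1-e^{-t}}\right)^{x+1}=\sum_{n\ge0}S_n(x)\frac{t^n}{n!}$. Then for every $n\ge0$, $$S_n(x)=n!\sum_{k=0}^{n}\binom{k+x}{k}\sum_{j=0}^{k}\frac{j!\,(-1)^{n+j}}{(n+j)!}\binom{k}{j}\left\{{n+j\atop j}\right\}.$$ *)

(* Formal power series in t with coefficients in {poly rat}
   (polynomials in the indeterminate x = 'X), represented as coefficient
   sequences nat -> {poly rat}. *)
From HB Require Import structures.
From mathcomp Require Import all_boot all_order all_algebra.
Set Implicit Arguments. Unset Strict Implicit. Unset Printing Implicit Defensive.
Import GRing.Theory Num.Theory.
Local Open Scope ring_scope.

Definition series := nat -> {poly rat}.

Definition ser_one : series := fun n => (n == 0%N)%:R.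
Definition ser_sub (f g : series) : series := fun n => f n - g n.
Definition ser_mul (f g : series) : series :=
  fun n => \sum_(i < n.+1) f i * g (n - i)%N.
Definition ser_pow (f : series) (k : nat) : series := iter k (ser_mul f) ser_one.

Definition gbinom (a : {poly rat}) (k : nat) : {poly rat} :=
  (k`!%:R : rat)^-1 *: \prod_(i < k) (a - i%:R).

(* f ^ a for a series f with constant term 1 and arbitrary exponent a,
   via the binomial series f^a = sum_k binom(a,k) (f-1)^k (only k <= n
   contributes to the coefficient of t^n). *)
Definition ser_cpow (f : series) (a : {poly rat}) : series :=
  fun n => \sum_(k < n.+1) gbinom a k * ser_pow (ser_sub f ser_one) k n.

Definition ser_inv (f : series) : series := ser_cpow f (-1).

Definition ser_exp_neg : series := fun n => ((-1) ^+ n / n`!%:R : rat)%:P.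
Definition ser_divt (f : series) : series := fun n => f n.+1.

Definition todd_series : series :=
  ser_inv (ser_divt (ser_sub ser_one ser_exp_neg)).

Definition stirling_poly (n : nat) : {poly rat} :=
  n`!%:R * ser_cpow todd_series ('X + 1) n.

Fixpoint stirling2 (n k : nat) : nat :=
  match n, k with
  | 0, 0 => 1
  | 0, _.+1 => 0
  | _.+1, 0 => 0
  | n'.+1, k'.+1 => k'.+1 * stirling2 n' k'.+1 + stirling2 n' k'
  end.

From HB Require Import structures.
From mathcomp Require Import all_boot all_order all_algebra.
From mathcomp Require Import zify ring.
Import GRing.Theory Num.Theory.
Set Implicit Arguments. Unset Strict Implicit. Unset Printing Implicit Defensive.
Local Open Scope ring_scope.

(* Both sides of the identity are polynomials in x, so it suffices to check
   it after substituting x := m for every natural number m.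
   - Series are compared through their truncations: [tser N f] is the
     polynomial in t agreeing with f up to t^N, and [eq_trunc N] is equality
     modulo t^(N+1); products, powers and differences of series become
     ring operations on truncations.
   - For a natural exponent the binomial series is the ordinary power
     (ser_cpow_nat), and for f with constant term 1 the negative binomial
     expansion (1/f)^(m+1) = sum_k C(m+k,k) (1-f)^k holds (ser_pow_inv).
   - With u = (1-e^{-t})/t, the power E^j of E = t u = 1 - e^{-t} has
     coefficients (-1)^(m+j) j! {m over j} / m!, since E' = 1 - E; by the
     binomial theorem this identifies the inner sum of the theorem with the
     coefficient of t^n in (1-u)^k (stirling_inner_pow).
   - Coefficients of t/(1-e^{-t}) do not involve x, so substituting x := m
     commutes with ser_cpow (ser_cpow_comp), and the two sides agree at x = m. *)

Section TruncatedEquality.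
Variable R : comNzRingType.
Implicit Types p q r : {poly R}.

Definition eq_trunc (N : nat) p q := forall i, (i <= N)%N -> p`_i = q`_i.

Lemma eq_trunc_trans N p q r : eq_trunc N p q -> eq_trunc N q r -> eq_trunc N p r.
Proof. by move=> hpq hqr i hi; rewrite hpq // hqr. Qed.

Lemma eq_truncMl N r p q : eq_trunc N p q -> eq_trunc N (r * p) (r * q).
Proof.
move=> h i hi; rewrite !coefM; apply: eq_bigr => j _; rewrite h //.
exact: leq_trans (leq_subr _ _) hi.
Qed.

Lemma eq_truncMr N r p q : eq_trunc N p q -> eq_trunc N (p * r) (q * r).
Proof. by rewrite ![_ * r]mulrC; apply: eq_truncMl. Qed.

Lemma eq_truncM N p p' q q' :
  eq_trunc N p p' -> eq_trunc N q q' -> eq_trunc N (p * q) (p' * q').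
Proof. by move=> hp hq; apply: eq_trunc_trans (eq_truncMr _ hp) (eq_truncMl _ hq). Qed.

Lemma eq_truncB N p p' q q' :
  eq_trunc N p p' -> eq_trunc N q q' -> eq_trunc N (p - q) (p' - q').
Proof. by move=> hp hq i hi; rewrite !coefB hp // hq. Qed.

Lemma eq_truncX N p q k : eq_trunc N p q -> eq_trunc N (p ^+ k) (q ^+ k).
Proof.
move=> h; elim: k => [|k IH]; first by move=> i.
by rewrite !exprS; apply: eq_truncM.
Qed.

Lemma coefX_vanish p k i : p`_0 = 0 -> (i < k)%N -> (p ^+ k)`_i = 0.
Proof.
move=> p0; elim: k i => [//|k IH] i hi.
rewrite exprS coefM big_ord_recl p0 mul0r add0r big1 // => j _.
by rewrite IH ?mulr0 // lift0; move: (ltn_ord j) hi; lia.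
Qed.

End TruncatedEquality.

Lemma sum_vanishing_tail (G : nmodType) (a b : nat) (F : nat -> G) :
  (a <= b)%N -> (forall k, (a <= k)%N -> (k < b)%N -> F k = 0) ->
  \sum_(k < b) F k = \sum_(k < a) F k.
Proof.
move=> hab h; rewrite -!(big_mkord xpredT) (big_cat_nat (leq0n a) hab) /=.
suff -> : \sum_(a <= k < b) F k = 0 by rewrite addr0.
by rewrite big_nat_cond big1 // => k /andP[/andP[hak hkb] _]; exact: h.
Qed.

Definition tser (N : nat) (f : series) : {poly {poly rat}} := \poly_(i < N.+1) f i.

Lemma coef_tser N f i : (i <= N)%N -> (tser N f)`_i = f i.
Proof. by move=> hi; rewrite coef_poly ltnS hi. Qed.

Lemma coef_ser_mul N f g k : (k <= N)%N -> ser_mul f g k = (tser N f * tser N g)`_k.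
Proof.
move=> hk; rewrite coefM; apply: eq_bigr => j _.
have hj : (j <= N)%N by apply: leq_trans hk; rewrite -ltnS.
by rewrite !coef_tser // (leq_trans (leq_subr _ _) hk).
Qed.

Lemma tser_pow N f j : eq_trunc N (tser N (ser_pow f j)) (tser N f ^+ j).
Proof.
elim: j => [|j IH] k hk; first by rewrite coef_tser // expr0 coef1.
rewrite coef_tser // /ser_pow iterS -/(ser_pow f j) (coef_ser_mul _ _ hk) exprS.
exact: (eq_truncMl _ IH hk).
Qed.

Lemma coef_ser_pow N f j k : (k <= N)%N -> ser_pow f j k = (tser N f ^+ j)`_k.
Proof. by move=> hk; rewrite -tser_pow // coef_tser. Qed.

Lemma tser_sub N f g : eq_trunc N (tser N (ser_sub f g)) (tser N f - tser N g).
Proof. by move=> i hi; rewrite coefB !coef_tser. Qed.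

Lemma tser_one N : eq_trunc N (tser N ser_one) 1.
Proof. by move=> i hi; rewrite coef_tser // coef1. Qed.

Lemma tser_sub_one N f : eq_trunc N (tser N (ser_sub f ser_one)) (tser N f - 1).
Proof.
by apply: eq_trunc_trans (tser_sub _ _) _; apply: eq_truncB; [move=> i | exact: tser_one].
Qed.

Lemma tser_one_sub N f : eq_trunc N (tser N (ser_sub ser_one f)) (1 - tser N f).
Proof.
by apply: eq_trunc_trans (tser_sub _ _) _; apply: eq_truncB; [exact: tser_one | move=> i].
Qed.

Lemma prod_ffact (R : nzRingType) (m k : nat) :
  \prod_(i < k) (m%:R - i%:R : R) = (m ^_ k)%:R.
Proof.
elim: k => [|k IH]; first by rewrite big_ord0 ffactn0.
rewrite big_ord_recr /= IH ffactnSr natrM.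
case: (leqP k m) => hk; first by rewrite natrB.
by rewrite ffact_small // !mul0r.
Qed.

Lemma scale_invfact (p : {poly rat}) (k : nat) : (k`!%:R : rat)^-1 *: (p * k`!%:R) = p.
Proof.
rewrite mulr_natr -(@scaler_nat rat {poly rat}) scalerA mulVf ?scale1r //.
by rewrite pnatr_eq0 -lt0n fact_gt0.
Qed.

Lemma gbinom_nat m k : gbinom m%:R k = 'C(m, k)%:R.
Proof. by rewrite /gbinom prod_ffact -bin_ffact natrM scale_invfact. Qed.

Lemma gbinom_N1 k : gbinom (-1) k = (-1) ^+ k.
Proof.
rewrite /gbinom; suff -> : \prod_(i < k) (-1 - i%:R : {poly rat}) = (-1) ^+ k * k`!%:R.
  by rewrite scale_invfact.
elim: k => [|k IH]; first by rewrite big_ord0 expr0 mul1r.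
rewrite big_ord_recr /= IH factS natrM exprS.
have -> : -1 - k%:R = - (k.+1)%:R :> {poly rat} by rewrite -natr1 opprD addrC.
ring.
Qed.

Lemma gbinom_comp p q k : gbinom p k \Po q = gbinom (p \Po q) k.
Proof.
rewrite /gbinom comp_polyZ rmorph_prod; congr (_ *: _).
by apply: eq_bigr => i _; rewrite rmorphB /= rmorph_nat.
Qed.

Lemma ser_cpow_nat f m n : f 0%N = 1 -> ser_cpow f m%:R n = ser_pow f m n.
Proof.
move=> f0; set P := tser n f.
have P10 : (P - 1)`_0 = 0 by rewrite coefB coef_tser // f0 coef1 subrr.
pose F k := ((P - 1) ^+ k)`_n *+ 'C(m, k).
transitivity (\sum_(k < n.+1) F k).
  apply: eq_bigr => k _; rewrite gbinom_nat mulr_natl (coef_ser_pow (N := n)) //.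
  by rewrite (eq_truncX k (tser_sub_one (N := n) f) (leqnn n)).
rewrite -(@sum_vanishing_tail _ n.+1 (n + m.+1) F); first last.
- by move=> k hk _; rewrite /F coefX_vanish // mul0rn.
- by rewrite addnS ltnS leq_addr.
rewrite (@sum_vanishing_tail _ m.+1 (n + m.+1) F); first last.
- by move=> k hk _; rewrite /F bin_small // mulr0n.
- exact: leq_addl.
rewrite (coef_ser_pow (N := n)) // -/P -[P](subrK 1) exprD1n coef_sum.
by apply: eq_bigr => k _; rewrite coefMn.
Qed.

Lemma ser_inv0 f : ser_inv f 0%N = 1.
Proof. by rewrite /ser_inv /ser_cpow big_ord1 gbinom_N1 expr0 mul1r. Qed.

Section SeriesInverse.
Variables (f : series) (N : nat).
Hypothesis f0 : f 0%N = 1.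
Let U : {poly {poly rat}} := tser N f.
Let V : {poly {poly rat}} := 1 - U.
Let H : {poly {poly rat}} := tser N (ser_inv f).

Lemma V0 : V`_0 = 0.
Proof. by rewrite coefB coef_tser // f0 coef1 subrr. Qed.

Lemma inv_geometric : eq_trunc N H (\sum_(k < N.+1) V ^+ k).
Proof.
move=> i hi; rewrite coef_tser // coef_sum.
rewrite (@sum_vanishing_tail _ i.+1 N.+1 (fun k => (V ^+ k)`_i)) //; last first.
  by move=> k hk _; rewrite coefX_vanish // V0.
apply: eq_bigr => k _.
rewrite gbinom_N1 (coef_ser_pow (N := N)) // (eq_truncX k (tser_sub_one (N := N) f) hi).
by rewrite -coefCM rmorph_sign -exprMn mulN1r opprB.
Qed.

(* H is an inverse of U modulo t^(N+1), since (sum_(k<=N) V^k) (1 - V) = 1 - V^(N+1). *)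
Lemma inv_mul : eq_trunc N (H * U) 1.
Proof.
apply: eq_trunc_trans (eq_truncMr U inv_geometric) _.
have -> : U = 1 - V by rewrite opprB addrC subrK.
rewrite -opprB mulrN mulrC -subrX1 opprB => i hi.
by rewrite coefB (coefX_vanish V0) // subr0.
Qed.

Let negbin (m : nat) : {poly {poly rat}} := \sum_(k < N.+1) V ^+ k *+ 'C(m + k, k).

(* Pascal's rule splits negbin (m+1) as negbin m + V * (...); multiplying by
   U = 1 - V telescopes, leaving negbin m up to a multiple of V^(N+1). *)
Lemma negbin_step m : eq_trunc N (negbin m) (negbin m.+1 * U).
Proof.
pose T := V * \sum_(k < N) V ^+ k *+ 'C(m.+1 + k, k).
have pascal : negbin m.+1 = negbin m + T.
  rewrite /negbin !big_ord_recl !bin0 /T mulr_sumr -addrA; congr (_ + _).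
  rewrite -big_split /=; apply: eq_bigr => k _.
  rewrite /bump /= add1n addSn binS mulrnDr; congr (_ + _).
  by rewrite mulrnAr -exprS addSnnS.
have shift : negbin m.+1 * V = T + V ^+ N.+1 *+ 'C(m.+1 + N, N).
  rewrite /negbin big_ord_recr /= mulrDl; congr (_ + _); first exact: mulrC.
  by rewrite mulrnAl exprSr.
have -> : negbin m.+1 * U = negbin m - V ^+ N.+1 *+ 'C(m.+1 + N, N).
  rewrite (_ : U = 1 - V); last by rewrite opprB addrC subrK.
  by rewrite mulrBr mulr1 shift {1}pascal opprD addrA addrK.
by move=> i hi; rewrite coefB coefMn (coefX_vanish V0) // mul0rn subr0.
Qed.

Lemma inv_pow m : eq_trunc N (H ^+ m.+1) (negbin m).
Proof.
elim: m => [|m IH].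
  rewrite expr1; apply: eq_trunc_trans inv_geometric _ => i hi.
  by rewrite /negbin; under [in RHS]eq_bigr => k _ do rewrite add0n binn.
rewrite exprS; apply: eq_trunc_trans (eq_truncMl H IH) _ => i hi.
by rewrite (eq_truncMl H (negbin_step m) hi) mulrCA (eq_truncMl _ inv_mul hi) mulr1.
Qed.

End SeriesInverse.

Lemma ser_cpow_inv_nat f m n : f 0%N = 1 ->
  ser_cpow (ser_inv f) m.+1%:R n =
  \sum_(k < n.+1) 'C(m + k, k)%:R * ser_pow (ser_sub ser_one f) k n.
Proof.
move=> f0; rewrite ser_cpow_nat ?ser_inv0 // (coef_ser_pow (N := n)) //.
rewrite (inv_pow f0 m (leqnn n)) coef_sum; apply: eq_bigr => k _.
by rewrite coefMn mulr_natl (coef_ser_pow (N := n)) // (eq_truncX k (tser_one_sub (N := n) f)).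
Qed.

Definition const_series (f : series) := forall q i, f i \Po q = f i.

Lemma const_ser_one : const_series ser_one.
Proof. by move=> q i; rewrite rmorph_nat. Qed.

Lemma const_ser_sub f g : const_series f -> const_series g -> const_series (ser_sub f g).
Proof. by move=> hf hg q i; rewrite rmorphB /= hf hg. Qed.

Lemma const_ser_mul f g : const_series f -> const_series g -> const_series (ser_mul f g).
Proof.
by move=> hf hg q i; rewrite rmorph_sum; apply: eq_bigr => j _; rewrite rmorphM /= hf hg.
Qed.

Lemma const_ser_pow f k : const_series f -> const_series (ser_pow f k).
Proof.
move=> hf; elim: k => [|k IH]; first exact: const_ser_one.
by rewrite /ser_pow iterS; apply: const_ser_mul.
Qed.

Lemma ser_cpow_comp f a q n :
  const_series f -> ser_cpow f a n \Po q = ser_cpow f (a \Po q) n.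
Proof.
move=> hf; rewrite rmorph_sum; apply: eq_bigr => k _.
rewrite rmorphM /= gbinom_comp; congr (_ * _).
by apply: const_ser_pow; apply: const_ser_sub => //; exact: const_ser_one.
Qed.

Definition todd_denom : series := ser_divt (ser_sub ser_one ser_exp_neg).

Lemma todd_denomE i : todd_denom i = ((-1) ^+ i / i.+1`!%:R : rat)%:P.
Proof.
rewrite /todd_denom /ser_divt /ser_sub /ser_one /ser_exp_neg mulr0n sub0r -polyCN.
by rewrite exprS mulN1r mulNr opprK.
Qed.

Lemma todd_denom0 : todd_denom 0%N = 1.
Proof. by rewrite todd_denomE expr0 mul1r factS fact0 mul1n invr1. Qed.

Lemma todd_seriesE : todd_series = ser_inv todd_denom.
Proof. by []. Qed.

Lemma const_todd : const_series todd_series.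
Proof.
move=> q i; rewrite todd_seriesE /ser_inv ser_cpow_comp ?rmorphN1 // => p j.
by rewrite todd_denomE comp_polyC.
Qed.

(* The coefficient of t^m in (1 - e^{-t})^j, namely (-1)^(m+j) j! {m over j} / m!. *)
Definition stirling_coef (m j : nat) : rat :=
  (-1) ^+ (m + j) * j`!%:R * (stirling2 m j)%:R / m`!%:R.

Lemma fact_neq0 k : (k`!%:R : rat) != 0.
Proof. by rewrite pnatr_eq0 -lt0n fact_gt0. Qed.

Lemma stirling_coefS m j :
  (m.+1%:R : rat)^-1 * ((stirling_coef m j - stirling_coef m j.+1) *+ j.+1) =
  stirling_coef m.+1 j.+1.
Proof.
rewrite /stirling_coef [stirling2 m.+1 j.+1]/= natrD natrM !factS !natrM.
have e1 : (-1) ^+ (m + j.+1) = - (-1) ^+ (m + j) :> rat by rewrite addnS exprS mulN1r.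
have e2 : (-1) ^+ (m.+1 + j.+1) = (-1) ^+ (m + j) :> rat by rewrite addSn exprS e1 mulN1r opprK.
rewrite e1 e2 -[(_ - _) *+ _]mulr_natr.
by field; rewrite fact_neq0 addrC natr1 pnatr_eq0.
Qed.

Lemma divfactS (c : rat) k : (c / k.+1`!%:R) *+ k.+1 = c / k`!%:R.
Proof. by rewrite factS natrM -mulr_natr; field; rewrite fact_neq0 addrC natr1 pnatr_eq0. Qed.

Section OneMinusExp.
(* E is the truncation of t * todd_denom = 1 - e^{-t}; it satisfies E' = 1 - E. *)
Variable N : nat.
Let E : {poly {poly rat}} := 'X * tser N todd_denom.

Lemma coefE0 : E`_0 = 0.
Proof. by rewrite coefXM. Qed.

Lemma coefES i : (i <= N)%N -> E`_i.+1 = todd_denom i.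
Proof. by move=> hi; rewrite coefXM /= coef_tser. Qed.

Lemma deriv_E : eq_trunc N E^`() (1 - E).
Proof.
move=> i hi; rewrite coef_deriv coefES // todd_denomE -polyCMn coefB coef1 divfactS.
case: i hi => [|i] hi; first by rewrite coefE0 subr0 expr0 fact0 invr1 mulr1.
by rewrite (coefES (ltnW hi)) todd_denomE sub0r -polyCN exprS mulN1r mulNr.
Qed.

Lemma coef_Epow_rec j m : (m <= N)%N ->
  (E ^+ j.+1)`_m.+1 *+ m.+1 = ((E ^+ j)`_m - (E ^+ j.+1)`_m) *+ j.+1.
Proof.
move=> hm; rewrite -coef_deriv deriv_exp /= coefMn (eq_truncMr _ deriv_E hm).
by rewrite mulrBl mul1r -exprS coefB.
Qed.

Lemma coef_Epow m j : (m <= N.+1)%N -> (E ^+ j)`_m = (stirling_coef m j)%:P.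
Proof.
elim: m j => [|m IH] [|j] hm.
- by rewrite expr0 coef1 /stirling_coef /= expr0 !mul1r polyC_natr fact0.
- by rewrite exprS coef0M coefE0 mul0r /stirling_coef /= mulr0 mul0r.
- by rewrite expr0 coef1 /stirling_coef /= mulr0 mul0r.
have := coef_Epow_rec j hm; rewrite !IH ?(ltnW hm) // -!polyCB -!polyCMn => rec.
have -> : (E ^+ j.+1)`_m.+1 = (m.+1%:R : rat)^-1 *: ((E ^+ j.+1)`_m.+1 *+ m.+1).
  by rewrite -scaler_nat scalerA mulVf ?scale1r // pnatr_eq0.
by rewrite rec -mul_polyC -polyCM stirling_coefS.
Qed.

End OneMinusExp.

(* Since t^j todd_denom^j = (1 - e^{-t})^j, its t^n coefficient is that of t^(n+j) in E^j. *)
Lemma ser_pow_todd_denom j n : ser_pow todd_denom j n = (stirling_coef (n + j) j)%:P.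
Proof.
rewrite (coef_ser_pow (N := n + j)) ?leq_addr // -(coef_Epow (N := n + j)) //.
by rewrite exprMn coefXnM ltnNge leq_addl /= addnK.
Qed.

Definition stirling_inner (n k : nat) : {poly rat} :=
  \sum_(j < k.+1)
      ((j`!%:R * (-1) ^+ (n + j) / (n + j)`!%:R : rat)
        * (('C(k, j) * stirling2 (n + j) j)%N)%:R)%:P.

(* Binomial expansion of (1 - todd_denom)^k, using ser_pow_todd_denom termwise. *)
Lemma stirling_inner_pow n k :
  stirling_inner n k = ser_pow (ser_sub ser_one todd_denom) k n.
Proof.
rewrite (coef_ser_pow (N := n)) // (eq_truncX k (tser_one_sub (N := n) _) (leqnn n)).
rewrite addrC exprD1n coef_sum; apply: eq_bigr => j _.
rewrite coefMn [(- tser _ _) ^+ _]exprNn -(rmorph_sign (@polyC {poly rat})) coefCM -coef_ser_pow //.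
rewrite ser_pow_todd_denom -(rmorph_sign (@polyC rat)) -polyCM -polyCMn; congr (_%:P).
have sign : (-1) ^+ j * (-1) ^+ (n + j + j) = (-1) ^+ (n + j) :> rat.
  by rewrite exprD mulrCA -expr2 sqrr_sign mulr1.
by rewrite /stirling_coef -mulr_natr !mulrA sign natrM; ring.
Qed.

Lemma const_stirling_inner n k q : stirling_inner n k \Po q = stirling_inner n k.
Proof. by rewrite rmorph_sum; apply: eq_bigr => j _ /=; rewrite comp_polyC. Qed.

Lemma poly_eq_on_nat (R : numDomainType) (p q : {poly R}) :
  (forall m : nat, p \Po m%:R = q \Po m%:R) -> p = q.
Proof.
move=> h; apply/eqP; rewrite -subr_eq0; apply: contraT => hD.
have roots m : root (p - q) m%:R.
  have := h m; rewrite -polyC_natr !comp_polyCr => /polyC_inj hm.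
  by rewrite /root hornerD hornerN hm subrr.
have := max_poly_roots hD (rs := [seq (i%:R : R) | i <- iota 0 (size (p - q))]).
rewrite size_map size_iota ltnn; apply.
  by apply/allP => x /mapP [i _ ->].
by rewrite map_inj_uniq ?iota_uniq // => a b /eqP; rewrite eqr_nat => /eqP.
Qed.

Theorem mainTheorem8 (n : nat) :
  stirling_poly n =
  n`!%:R * \sum_(k < n.+1) gbinom ('X + k%:R) k *
    \sum_(j < k.+1)
      ((j`!%:R * (-1) ^+ (n + j) / (n + j)`!%:R : rat)
        * (('C(k, j) * stirling2 (n + j) j)%N)%:R)%:P.
Proof.
rewrite /stirling_poly; congr (_ * _).
change (ser_cpow todd_series ('X + 1) n =
  \sum_(k < n.+1) gbinom ('X + k%:R) k * stirling_inner n k).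
apply: poly_eq_on_nat => m.
have natD a b : ('X + a%:R) \Po b%:R = (b + a)%:R :> {poly rat}.
  by rewrite comp_polyD comp_polyX rmorph_nat natrD.
rewrite ser_cpow_comp; last exact: const_todd.
rewrite rmorphD /= comp_polyX rmorph1 natr1.
rewrite todd_seriesE ser_cpow_inv_nat ?todd_denom0 //.
rewrite rmorph_sum; apply: eq_bigr => k _.
by rewrite rmorphM /= gbinom_comp natD gbinom_nat const_stirling_inner stirling_inner_pow.
Qed.
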